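(* Let $F(V)$ be the set of formulas of $\mathrm{q}\L^{*}$ and let $\sim$ be the relation on $F(V)$ given by $p\sim q$ iff $\vdash p\leftrightarrow q$. Then $[\mathbf{F}(\mathbf{V})]_\sim=\langle [F(V)]_\sim;\to,\neg,{}^{+},{}^{-},[1]_\sim\rangle$, with $\neg[p]_\sim=[\neg p]_\sim$, $[p]_\sim\to[q]_\sim=[p\to q]_\sim$, $([p]_\sim)^{+}=[p^{+}]_\sim$, $([p]_\sim)^{-}=[p^{-}]_\sim$, is a quasi-Wajsberg* algebra.
   Context: Let $V=\{p_1,p_2,\ldots\}$ be a set of propositional variables and $F(V)$ the set of formulas built from $V$ and the constant $1$ with the binary connective $\to$ and the unary connectives $\neg$, ${}^{+}$, ${}^{-}$ (postfix ${}^+,{}^-$ bind tighter than $\neg$, which binds tighter than $\to$). Abbreviations: $p\vee q:=((p^{+}\to q^{+})^{+}\to(\neg p)^{-})\to((q^{-}\to p^{-})^{-}\to p^{-})$; $A\leftrightarrow B$ as an axiom stands for the two axioms $A\to B$ and $B\to A$, and $\vdash A\leftrightarrow B$ means $\vdash A\to B$ and $\vdash B\to A$. Axiom schemas of $\mathrm{q}\L^{*}$ (for all formulas $p,q,r$): (Q1) $(p\to q)\leftrightarrow(\neg q\to\neg p)$; (Q2) $1\leftrightarrow((1\to p)\to 1)$; (Q3) $p\leftrightarrow((q\to q)\to p)$; (Q4) $(p\to q)\leftrightarrow((q^{+}\to p^{-})\to(p^{+}\to q^{-}))$; (Q5) $\neg(p\to q)\leftrightarrow(q\to p)$; (Q6)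 $(p\to(\neg p\to q))^{+}\leftrightarrow(p^{+}\to(\neg p^{+}\to q^{+}))$; (Q7) $(p\to(q\vee r))\leftrightarrow((p\to r)\vee(p\to q))$; (Q8) $(p\vee(q\vee r))\leftrightarrow((p\vee q)\vee r)$; (Q9) $((p\to 1)\to((q\to 1)\to r))\to((q\to 1)\to((p\to 1)\to r))$; (Q10) $p\to 1$; (Q11) $((1\to 1)\to p^{+})\leftrightarrow((p\to 1)\to 1)$ and $((1\to 1)\to p^{-})\leftrightarrow((p\to\neg 1)\to\neg 1)$. Deduction rules: (R1) from $p$ and $p\to q$ infer $(r\to r)\to q$; (R2) from $(r\to r)\to(p\to q)$ infer $p\to q$; (R3) from $p\to q$ and $r\to t$ infer $(q\to r)\to(p\to t)$. $\vdash q$ means $q$ has a proof (finite sequence of axioms and rule applications ending in $q$). The relation $\sim$ is a congruence for $\to,\neg,{}^+,{}^-$, so the operations on classes $[p]_\sim$ are well defined. A quasi-Wajsberg* algebra is an algebra $\langle W;\to,\neg,{}^{+},{}^{-},1\rangle$ of type $\langle2,1,1,1,0\rangle$ such that for all $x,y,z\in W$: (QW*1) $x\to y=\neg y\to\neg x$; (QW*2) $(x\to 1)\to((y\to 1)\to z)=(y\to 1)\to((x\to 1)\to z)$; (QW*3) $(1\to x)\to 1=1$; (QW*4) $(z\to z)\to(x\to y)=x\to y$; (QW*5) $(1\to 1)\to x^{+}=((1\to 1)\to x)^{+}=(x\to 1)\to 1$ and $(1\to 1)\to x^{-}=((1\to 1)\to x)^{-}=(x\to\neg 1)\to\neg 1$;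 (QW*6) $x\to y=(y^{+}\to x^{-})\to(x^{+}\to y^{-})$; (QW*7) $\neg(x\to y)=y\to x$; (QW*8) $\neg\neg x=x$; (QW*9) $(x\to(\neg x\to y))^{+}=x^{+}\to(\neg x^{+}\to y^{+})$; (QW*10) $x\vee y=y\vee x$; (QW*11) $x\vee(y\vee z)=(x\vee y)\vee z$; (QW*12) $x\to(y\vee z)=(x\to y)\vee(x\to z)$; where $x\vee y:=((x^{+}\to y^{+})^{+}\to(\neg x)^{-})\to((y^{-}\to x^{-})^{-}\to x^{-})$. *)

From Stdlib Require Import ClassicalEpsilon.

Inductive formula : Type :=
| Var : nat -> formula
| One : formula
| Imp : formula -> formula -> formula
| Neg : formula -> formula
| Plus : formula -> formula
| Minus : formula -> formula.

Definition fvee (p q : formula) : formula :=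
  Imp (Imp (Plus (Imp (Plus p) (Plus q))) (Minus (Neg p)))
      (Imp (Minus (Imp (Minus q) (Minus p))) (Minus p)).

(* Axiom schemas of qL*; an axiom A <-> B stands for A -> B and B -> A. *)
Inductive is_axiom : formula -> Prop :=
| Q1a p q : is_axiom (Imp (Imp p q) (Imp (Neg q) (Neg p)))
| Q1b p q : is_axiom (Imp (Imp (Neg q) (Neg p)) (Imp p q))
| Q2a p : is_axiom (Imp One (Imp (Imp One p) One))
| Q2b p : is_axiom (Imp (Imp (Imp One p) One) One)
| Q3a p q : is_axiom (Imp p (Imp (Imp q q) p))
| Q3b p q : is_axiom (Imp (Imp (Imp q q) p) p)
| Q4a p q : is_axiom (Imp (Imp p q)
                          (Imp (Imp (Plus q) (Minus p)) (Imp (Plus p) (Minus q))))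
| Q4b p q : is_axiom (Imp (Imp (Imp (Plus q) (Minus p)) (Imp (Plus p) (Minus q)))
                          (Imp p q))
| Q5a p q : is_axiom (Imp (Neg (Imp p q)) (Imp q p))
| Q5b p q : is_axiom (Imp (Imp q p) (Neg (Imp p q)))
| Q6a p q : is_axiom (Imp (Plus (Imp p (Imp (Neg p) q)))
                          (Imp (Plus p) (Imp (Neg (Plus p)) (Plus q))))
| Q6b p q : is_axiom (Imp (Imp (Plus p) (Imp (Neg (Plus p)) (Plus q)))
                          (Plus (Imp p (Imp (Neg p) q))))
| Q7a p q r : is_axiom (Imp (Imp p (fvee q r)) (fvee (Imp p r) (Imp p q)))
| Q7b p q r : is_axiom (Imp (fvee (Imp p r) (Imp p q)) (Imp p (fvee q r)))
| Q8a p q r : is_axiom (Imp (fvee p (fvee q r)) (fvee (fvee p q) r))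
| Q8b p q r : is_axiom (Imp (fvee (fvee p q) r) (fvee p (fvee q r)))
| Q9 p q r : is_axiom (Imp (Imp (Imp p One) (Imp (Imp q One) r))
                           (Imp (Imp q One) (Imp (Imp p One) r)))
| Q10 p : is_axiom (Imp p One)
| Q11a p : is_axiom (Imp (Imp (Imp One One) (Plus p)) (Imp (Imp p One) One))
| Q11b p : is_axiom (Imp (Imp (Imp p One) One) (Imp (Imp One One) (Plus p)))
| Q11c p : is_axiom (Imp (Imp (Imp One One) (Minus p))
                         (Imp (Imp p (Neg One)) (Neg One)))
| Q11d p : is_axiom (Imp (Imp (Imp p (Neg One)) (Neg One))
                         (Imp (Imp One One) (Minus p))).

Inductive prov : formula -> Prop :=
| prov_ax p : is_axiom p -> prov p
| prov_R1 p q r : prov p -> prov (Imp p q) -> prov (Imp (Imp r r) q)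
| prov_R2 p q r : prov (Imp (Imp r r) (Imp p q)) -> prov (Imp p q)
| prov_R3 p q r t : prov (Imp p q) -> prov (Imp r t) ->
                    prov (Imp (Imp q r) (Imp p t)).

Definition fequiv (p q : formula) : Prop := prov (Imp p q) /\ prov (Imp q p).

Record fclass : Type := FClass {
  fc_set : formula -> Prop;
  fc_is_class : exists p, fc_set = fun q => fequiv p q
}.

Definition cls (p : formula) : fclass :=
  @FClass (fun q => fequiv p q) (ex_intro _ p eq_refl).

Definition repr (a : fclass) : formula :=
  proj1_sig (constructive_indefinite_description _ (fc_is_class a)).

Definition c_imp (a b : fclass) : fclass := cls (Imp (repr a) (repr b)).
Definition c_neg (a : fclass) : fclass := cls (Neg (repr a)).
Definition c_plus (a : fclass) : fclass := cls (Plus (repr a)).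
Definition c_minus (a : fclass) : fclass := cls (Minus (repr a)).
Definition c_one : fclass := cls One.

Section QW.
Variables (W : Type) (imp : W -> W -> W) (neg plus minus : W -> W) (one : W).

Definition wvee (x y : W) : W :=
  imp (imp (plus (imp (plus x) (plus y))) (minus (neg x)))
      (imp (minus (imp (minus y) (minus x))) (minus x)).

Definition is_qWstar : Prop :=
  (forall x y, imp x y = imp (neg y) (neg x)) /\
  (forall x y z, imp (imp x one) (imp (imp y one) z)
                 = imp (imp y one) (imp (imp x one) z)) /\
  (forall x, imp (imp one x) one = one) /\
  (forall x y z, imp (imp z z) (imp x y) = imp x y) /\
  (forall x, imp (imp one one) (plus x) = plus (imp (imp one one) x) /\
             plus (imp (imp one one) x) = imp (imp x one) one) /\
  (forall x, imp (imp one one) (minus x) = minus (imp (imp one one) x) /\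
             minus (imp (imp one one) x) = imp (imp x (neg one)) (neg one)) /\
  (forall x y, imp x y = imp (imp (plus y) (minus x)) (imp (plus x) (minus y))) /\
  (forall x y, neg (imp x y) = imp y x) /\
  (forall x, neg (neg x) = x) /\
  (forall x y, plus (imp x (imp (neg x) y))
               = imp (plus x) (imp (neg (plus x)) (plus y))) /\
  (forall x y, wvee x y = wvee y x) /\
  (forall x y z, wvee x (wvee y z) = wvee (wvee x y) z) /\
  (forall x y z, imp x (wvee y z) = wvee (imp x y) (imp x z)).
End QW.

(* Provable equivalence is a congruence for every connective ([Neg] by the
   contraposition axiom Q1; [Plus] and [Minus] because Q11 and Q3 turn [x^+]
   and [x^-] into implications in [x]), so the operations on classes are well
   defined and each QW* law reduces to an equivalence of formulas.  Each of
   these is an axiom, up to the neutrality of [(1 -> 1) -> _] from Q3, except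
   [Neg (Neg x) ~ x] (Q3 makes [x] an implication, which Q5 reverses twice)
   and commutativity of [fvee] (Q7 with [p := 1 -> 1]). *)

From Stdlib Require Import ClassicalEpsilon FunctionalExtensionality
  PropExtensionality ProofIrrelevance Morphisms.

Lemma prov_mp a p q : prov a -> prov (Imp a (Imp p q)) -> prov (Imp p q).
Proof. intros ha himp. apply (prov_R2 _ _ One), (prov_R1 _ _ _ ha himp). Qed.

Lemma prov_trans p q r : prov (Imp p q) -> prov (Imp q r) -> prov (Imp p r).
Proof. intros hpq hqr. apply (prov_R2 _ _ q), prov_R3; assumption. Qed.

Lemma prov_refl p : prov (Imp p p).
Proof. apply (prov_trans _ (Imp (Imp One One) p)); apply prov_ax; constructor. Qed.

#[export] Instance fequiv_Equivalence : Equivalence fequiv.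
Proof.
  split.
  - intro p; split; apply prov_refl.
  - intros p q [hpq hqp]; split; assumption.
  - intros p q r [hpq hqp] [hqr hrq]; split; eapply prov_trans; eassumption.
Qed.

Lemma fequiv_axioms p q : is_axiom (Imp p q) -> is_axiom (Imp q p) -> fequiv p q.
Proof. split; apply prov_ax; assumption. Qed.

Lemma fequiv_top_imp p : fequiv (Imp (Imp One One) p) p.
Proof. apply fequiv_axioms; constructor. Qed.

#[export] Instance Imp_Proper : Proper (fequiv ==> fequiv ==> fequiv) Imp.
Proof. intros p p' [hp hp'] q q' [hq hq']; split; apply prov_R3; assumption. Qed.

#[export] Instance Neg_Proper : Proper (fequiv ==> fequiv) Neg.
Proof.
  intros p q [hpq hqp].
  split; [apply (prov_mp _ _ _ hqp) | apply (prov_mp _ _ _ hpq)]; apply prov_ax, Q1a.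
Qed.

Lemma fequiv_Plus_Imp p : fequiv (Plus p) (Imp (Imp p One) One).
Proof. rewrite <- (fequiv_top_imp (Plus p)). apply fequiv_axioms; constructor. Qed.

Lemma fequiv_Minus_Imp p : fequiv (Minus p) (Imp (Imp p (Neg One)) (Neg One)).
Proof. rewrite <- (fequiv_top_imp (Minus p)). apply fequiv_axioms; constructor. Qed.

#[export] Instance Plus_Proper : Proper (fequiv ==> fequiv) Plus.
Proof. intros p q hpq. rewrite !fequiv_Plus_Imp, hpq. reflexivity. Qed.

#[export] Instance Minus_Proper : Proper (fequiv ==> fequiv) Minus.
Proof. intros p q hpq. rewrite !fequiv_Minus_Imp, hpq. reflexivity. Qed.

#[export] Instance fvee_Proper : Proper (fequiv ==> fequiv ==> fequiv) fvee.
Proof. intros p p' hp q q' hq. unfold fvee. rewrite hp, hq. reflexivity. Qed.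

Lemma fequiv_Neg_Neg p : fequiv (Neg (Neg p)) p.
Proof.
  rewrite <- (fequiv_top_imp p) at 1.
  rewrite (fequiv_axioms _ _ (Q5a _ _) (Q5b _ _)).
  rewrite (fequiv_axioms _ _ (Q5a _ _) (Q5b _ _)).
  apply fequiv_top_imp.
Qed.

Lemma fequiv_fvee_comm p q : fequiv (fvee p q) (fvee q p).
Proof.
  rewrite <- (fequiv_top_imp (fvee p q)).
  rewrite (fequiv_axioms _ _ (Q7a _ _ _) (Q7b _ _ _)).
  rewrite !fequiv_top_imp. reflexivity.
Qed.

Lemma fequiv_Imp_fvee p q r :
  fequiv (Imp p (fvee q r)) (fvee (Imp p q) (Imp p r)).
Proof.
  rewrite (fequiv_axioms _ _ (Q7a _ _ _) (Q7b _ _ _)). apply fequiv_fvee_comm.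
Qed.

Lemma FClass_ext s1 s2 h1 h2 : s1 = s2 -> @FClass s1 h1 = @FClass s2 h2.
Proof. intros <-. f_equal. apply proof_irrelevance. Qed.

Lemma cls_eq p q : fequiv p q -> cls p = cls q.
Proof.
  intros hpq. apply FClass_ext, functional_extensionality; intro r.
  apply propositional_extensionality. rewrite hpq. reflexivity.
Qed.

Lemma cls_eq_fequiv p q : cls p = cls q -> fequiv p q.
Proof.
  intros e. apply (f_equal fc_set) in e. simpl in e.
  change ((fun r => fequiv p r) q). rewrite e. reflexivity.
Qed.

Lemma cls_repr a : cls (repr a) = a.
Proof.
  destruct a as [s hs]. unfold repr; simpl.
  destruct (constructive_indefinite_description _ hs) as [p ->]; simpl.
  apply FClass_ext. reflexivity.
Qed.

Lemma repr_cls p : fequiv (repr (cls p)) p.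
Proof. apply cls_eq_fequiv. rewrite cls_repr. reflexivity. Qed.

Lemma c_imp_cls p q : c_imp (cls p) (cls q) = cls (Imp p q).
Proof. apply cls_eq. rewrite !repr_cls. reflexivity. Qed.

Lemma c_neg_cls p : c_neg (cls p) = cls (Neg p).
Proof. apply cls_eq. rewrite repr_cls. reflexivity. Qed.

Lemma c_plus_cls p : c_plus (cls p) = cls (Plus p).
Proof. apply cls_eq. rewrite repr_cls. reflexivity. Qed.

Lemma c_minus_cls p : c_minus (cls p) = cls (Minus p).
Proof. apply cls_eq. rewrite repr_cls. reflexivity. Qed.

Lemma cls_surj a : exists p, a = cls p.
Proof. exists (repr a). symmetry. apply cls_repr. Qed.

Theorem proposition5p3 :
  (forall p q, c_imp (cls p) (cls q) = cls (Imp p q)) /\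
  (forall p, c_neg (cls p) = cls (Neg p)) /\
  (forall p, c_plus (cls p) = cls (Plus p)) /\
  (forall p, c_minus (cls p) = cls (Minus p)) /\
  @is_qWstar fclass c_imp c_neg c_plus c_minus c_one.
Proof.
  split; [exact c_imp_cls |]. split; [exact c_neg_cls |].
  split; [exact c_plus_cls |]. split; [exact c_minus_cls |].
  unfold is_qWstar, wvee, c_one.
  repeat split; intros;
    repeat match goal with a : fclass |- _ => destruct (cls_surj a) as [? ->]; clear a end;
    repeat rewrite ?c_imp_cls, ?c_neg_cls, ?c_plus_cls, ?c_minus_cls; apply cls_eq.
  all: try (apply fequiv_axioms; constructor).
  - rewrite !fequiv_top_imp. reflexivity.
  - rewrite fequiv_top_imp. apply fequiv_Plus_Imp.
  - rewrite !fequiv_top_imp. reflexivity.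
  - rewrite fequiv_top_imp. apply fequiv_Minus_Imp.
  - apply fequiv_Neg_Neg.
  - apply fequiv_fvee_comm.
  - apply fequiv_Imp_fvee.
Qed.
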